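(* Let $\delta=\sum_i a_i\delta_{x_i}$ be a purely discontinuous finite measure on $(-\pi,\pi)$, $b\in(-\pi,0)\cup(0,\pi)$, let $\delta_H$ be the polarization of $\delta$ with respect to $b$, and let $I=[b,\pi]$ if $b>0$ and $I=[-\pi,b]$ if $b<0$. Then: (a) for $x\in I$ and $x'=2b-x$: $u_\delta(x)+u_\delta(x')\le u_{\delta_H}(x)+u_{\delta_H}(x')$; (b) for $x\in I$ and $x'=2b-x$: $u_\delta(x)\le u_{\delta_H}(x')$; (c) if $b>0$ and $x\in[-\pi,b]$ (respectively $b<0$ and $x\in[b,\pi]$), then $u_\delta(x)\le u_{\delta_H}(x)$. Moreover, for $b>0$ (resp. $b<0$) the following are equivalent: (i) $u_\delta(x)=u_{\delta_H}(x)$ for some $x\in(-\pi,b]$ (resp. $x\in[b,\pi)$); (ii) this equality holds for all $x\in(-\pi,b]$ (resp. $x\in[b,\pi)$); (iii) $u_\delta\equiv u_{\delta_H}$ on $[-\pi,\pi]$; (iv) $\delta=\delta_H$.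
   Context: A purely discontinuous measure is $\delta=\sum_i a_i\delta_{x_i}$ with distinct points $x_i\in(-\pi,\pi)$, $a_i\ge0$, $\sum_i a_i<\infty$, not the zero measure. $G(x,y)=-\frac{xy}{2\pi}-\frac12|x-y|+\frac{\pi}{2}$ on $[-\pi,\pi]^2$ and $u_\delta(x)=\int G(x,y)\,d\delta(y)=\sum_i a_iG(x,x_i)$. Polarization of $\delta$ with respect to $b$ is the purely discontinuous measure $\delta_H$ defined by: for $b\in(0,\pi)$, $\delta_H(\{x\})=\delta(\{x\})$ for $x\in(-\pi,2b-\pi)$, $\delta_H(\{x\})=\max\{\delta(\{x\}),\delta(\{2b-x\})\}$ for $x\in[2b-\pi,b]$, $\delta_H(\{x\})=\min\{\delta(\{x\}),\delta(\{2b-x\})\}$ for $x\in[b,\pi)$; for $b\in(-\pi,0)$, $\delta_H(\{x\})=\min\{\delta(\{x\}),\delta(\{2b-x\})\}$ for $x\in(-\pi,b]$, $\delta_H(\{x\})=\max\{\delta(\{x\}),\delta(\{2b-x\})\}$ for $x\in[b,2b+\pi]$, $\delta_H(\{x\})=\delta(\{x\})$ for $x\in(2b+\pi,\pi)$. *)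

From HB Require Import structures.
From mathcomp Require Import all_boot all_order all_algebra.
From mathcomp Require Import all_classical all_reals all_analysis.
Set Implicit Arguments. Unset Strict Implicit. Unset Printing Implicit Defensive.
Import Order.TTheory GRing.Theory Num.Theory.
Local Open Scope classical_set_scope.
Local Open Scope ring_scope.

Section Defs.
Variable R : realType.

(* A purely discontinuous measure is represented by its mass function
   m : R -> R, m x = delta({x}).  Its support is [set x | m x != 0]. *)
Definition supp (m : R -> R) : set R := [set x | m x != 0].

Definition pd_measure (m : R -> R) : Prop :=
  [/\ (forall x, 0 <= m x),
      (forall x, m x != 0 -> - pi < x < pi),
      countable (supp m),
      (\esum_(x in supp m) (m x)%:E < +oo)%E &
      (exists x, m x != 0)].

Definition G (x y : R) : R := - (x * y) / (2 * pi) - `|x - y| / 2 + pi / 2.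

Definition u (m : R -> R) (x : R) : R :=
  fine (\esum_(y in supp m) (m y * G x y)%:E).

Definition polar (b : R) (m : R -> R) (x : R) : R :=
  if ~~ ((- pi < x) && (x < pi)) then 0 else
  if 0 < b then
    (if x < 2 * b - pi then m x
     else if x <= b then Num.max (m x) (m (2 * b - x))
     else Num.min (m x) (m (2 * b - x)))
  else
    (if x <= b then Num.min (m x) (m (2 * b - x))
     else if x <= 2 * b + pi then Num.max (m x) (m (2 * b - x))
     else m x).

Definition Iset (b : R) : set R := if 0 < b then [set` `[b, pi]] else [set` `[- pi, b]].
Definition Jset (b : R) : set R := if 0 < b then [set` `[- pi, b]] else [set` `[b, pi]].
Definition Joset (b : R) : set R := if 0 < b then [set` `]- pi, b]] else [set` `[b, pi[].

End Defs.

From HB Require Import structures.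
From mathcomp Require Import all_boot all_order all_algebra.
From mathcomp Require Import all_classical all_reals all_analysis.
From mathcomp Require Import ring lra.
Import Order.TTheory GRing.Theory Num.Theory.
Local Open Scope classical_set_scope.
Local Open Scope ring_scope.

(* Write y' := 2b - y for the reflection in b, and let 0 < b < pi.  The atoms of
   the measure then split into pairs {y, y'} with b < y < pi, on which
   polarization replaces the masses (p, q) by (min p q, max p q), and fixed atoms
   (y = b, or y' outside (-pi, pi)) whose mass is unchanged.  Each inequality
   between potentials is thus a sum over pairs of two-point inequalities
   p a + q a' <= min p q * c + max p q * c', which reduce to comparisons of values
   of the kernel; since 2 pi G x y = (pi + min x y) (pi - max x y), these are
   polynomial inequalities.  For x in (-pi, b] the relevant kernel comparison is
   strict, so u_delta x = u_deltaH x forces min p q = p on every pair, that is,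
   deltaH = delta.  The case b < 0 follows from b > 0 under x |-> -x, which leaves
   G invariant. *)

Section esum_lemmas.
Context {R : realType} {T : choiceType}.
Local Open Scope ereal_scope.

Lemma ge0_fin_num_le (x y : \bar R) : y \is a fin_num -> 0 <= x -> x <= y ->
  x \is a fin_num.
Proof.
by move=> yfin x0 xy; rewrite ge0_fin_numE // (le_lt_trans xy) // ltey_eq yfin.
Qed.

Lemma lt_esum (I : set T) (f g : T -> \bar R) y0 :
  (forall y, I y -> 0 <= f y) -> (forall y, I y -> f y <= g y) ->
  I y0 -> f y0 < g y0 -> \esum_(y in I) g y \is a fin_num ->
  \esum_(y in I) f y < \esum_(y in I) g y.
Proof.
move=> f0 fg Iy0 fgy0.
have g0 y : I y -> 0 <= g y by move=> Iy; exact: le_trans (f0 _ Iy) (fg _ Iy).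
rewrite (esumID [set y0] I f) // (esumID [set y0] I g) //.
rewrite setIidr ?sub1set ?inE // !esum_set1 ?f0 ?g0 //.
rewrite fin_numD => /andP[_ gfin]; apply: lte_leD => //; last first.
  by apply: le_esum => y [/fg].
apply: (ge0_fin_num_le _ _ gfin); first by apply: esum_ge0 => y [/f0].
by apply: le_esum => y [/fg].
Qed.

End esum_lemmas.

Section esum_pairing.
Context {R : realType} {T : choiceType} {s : T -> T} {A : set T}.
Hypotheses (sK : involutive s) (sA : forall y, A y -> ~ A (s y)).
Local Open Scope ereal_scope.

Lemma esum_pair (f : T -> \bar R) : (forall y, 0 <= f y) ->
  \esum_(y in [set: T]) f y =
  \esum_(y in A) (f y + f (s y)) + \esum_(y in [set y | ~ A y /\ ~ A (s y)]) f y.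
Proof.
move=> f0; rewrite (esumID A) // !setTI [X in _ + X](esumID [set y | A (s y)]) //.
have -> : ~` A `&` [set y | A (s y)] = s @` A.
  apply/seteqP; split => y /=; first by move=> [_ Asy]; exists (s y); rewrite ?sK.
  by move=> [z Az <-]; rewrite sK; split => //; apply: sA.
rewrite esum_image; last by move=> y z _ _; apply: (inv_inj sK).
by rewrite esumD ?addeA.
Qed.

Lemma le_esum_pair (f g : T -> \bar R) :
  (forall y, 0 <= f y) -> (forall y, 0 <= g y) ->
  (forall y, A y -> f y + f (s y) <= g y + g (s y)) ->
  (forall y, ~ A y -> ~ A (s y) -> f y <= g y) ->
  \esum_(y in [set: T]) f y <= \esum_(y in [set: T]) g y.
Proof.
move=> f0 g0 fgA fgN; rewrite (esum_pair _ f0) (esum_pair _ g0).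
by apply: leeD; apply: le_esum; [move=> y /fgA | move=> y [/fgN]].
Qed.

Lemma lt_esum_pair (f g : T -> \bar R) y0 :
  (forall y, 0 <= f y) -> (forall y, 0 <= g y) ->
  (forall y, A y -> f y + f (s y) <= g y + g (s y)) ->
  (forall y, ~ A y -> ~ A (s y) -> f y <= g y) ->
  A y0 -> f y0 + f (s y0) < g y0 + g (s y0) ->
  \esum_(y in [set: T]) g y \is a fin_num ->
  \esum_(y in [set: T]) f y < \esum_(y in [set: T]) g y.
Proof.
move=> f0 g0 fgA fgN Ay0 fgy0; rewrite (esum_pair _ f0) (esum_pair _ g0).
rewrite fin_numD => /andP[gAfin gNfin].
have fNfin : \esum_(y in [set y | ~ A y /\ ~ A (s y)]) f y \is a fin_num.
  by apply: (ge0_fin_num_le _ _ gNfin); [exact: esum_ge0 | apply: le_esum => y [/fgN]].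
apply: lte_leD => //; last by apply: le_esum => y [/fgN].
by apply: (lt_esum _ _ _ _ _ _ Ay0) => // y _; rewrite adde_ge0.
Qed.

End esum_pairing.

Section min_max_combination.
Context {R : realDomainType}.

Lemma le_comb_minmax (p q a a' c c' : R) : 0 <= p -> 0 <= q ->
  a + a' <= c + c' -> a' <= c' -> a <= c' ->
  p * a + q * a' <= Num.min p q * c + Num.max p q * c'.
Proof. by move=> p0 q0 h1 h2 h3; case: (lerP p q) => pq; nra. Qed.

Lemma lt_comb_minmax (p q a c : R) : 0 <= q -> q < p -> a < c ->
  p * a + q * c < Num.min p q * a + Num.max p q * c.
Proof. by move=> q0 qp ac; case: (lerP p q) => pq; nra. Qed.

End min_max_combination.

Section kernel.
Context {R : realType}.
Implicit Types x y : R.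

Definition Gnum x y : R := pi ^+ 2 - x * y - pi * `|x - y|.

Lemma G_Gnum x y : G x y = Gnum x y / (2 * pi).
Proof.
rewrite /G /Gnum; have : (pi : R) != 0 by rewrite gt_eqF ?pi_gt0.
by move: (pi : R) => p p0; field.
Qed.

Lemma Gnum_le x y : x <= y -> Gnum x y = (pi + x) * (pi - y).
Proof. by move=> xy; rewrite /Gnum ler0_norm ?subr_le0 //; ring. Qed.

Lemma Gnum_ge x y : y <= x -> Gnum x y = (pi + y) * (pi - x).
Proof. by move=> yx; rewrite /Gnum ger0_norm ?subr_ge0 //; ring. Qed.

Lemma inv2pi_gt0 : 0 < (2 * pi : R)^-1.
Proof. by rewrite invr_gt0 mulr_gt0 ?pi_gt0. Qed.

Lemma ler_G x y x' y' : Gnum x y <= Gnum x' y' -> G x y <= G x' y'.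
Proof. by move=> h; rewrite !G_Gnum ler_pM2r ?inv2pi_gt0. Qed.

Lemma ltr_G x y x' y' : Gnum x y < Gnum x' y' -> G x y < G x' y'.
Proof. by move=> h; rewrite !G_Gnum ltr_pM2r ?inv2pi_gt0. Qed.

Lemma lerD_G x1 y1 x2 y2 x3 y3 x4 y4 :
  Gnum x1 y1 + Gnum x2 y2 <= Gnum x3 y3 + Gnum x4 y4 ->
  G x1 y1 + G x2 y2 <= G x3 y3 + G x4 y4.
Proof. by move=> h; rewrite !G_Gnum -!mulrDl ler_pM2r ?inv2pi_gt0. Qed.

Lemma G_ge0 x y : - pi <= x <= pi -> - pi <= y <= pi -> 0 <= G x y.
Proof.
move=> /andP[x1 x2] /andP[y1 y2]; rewrite G_Gnum mulr_ge0 //; last exact: ltW inv2pi_gt0.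
by have [xy|/ltW yx] := lerP x y; [rewrite Gnum_le // | rewrite Gnum_ge //];
  apply: mulr_ge0; lra.
Qed.

Lemma G_le2 x y : - pi <= x <= pi -> - pi <= y <= pi -> G x y <= 2.
Proof.
move=> /andP[x1 x2] /andP[y1 y2]; have := pihalf_lt2 R; have := pi_gt0 R.
suff : G x y <= pi / 2 by lra.
rewrite G_Gnum ler_pdivrMr ?mulr_gt0 ?pi_gt0 //.
have -> : pi / 2 * (2 * pi) = pi ^+ 2 :> R by field.
by have [xy|/ltW yx] := lerP x y; [rewrite Gnum_le // | rewrite Gnum_ge //]; nra.
Qed.

Lemma G_opp x y : G (- x) (- y) = G x y.
Proof. by rewrite /G mulrNN -opprD normrN; congr (_ - _ + _). Qed.

Lemma G_ge0_open x y : - pi <= x <= pi -> - pi < y < pi -> 0 <= G x y.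
Proof. by move=> hx /andP[y1 y2]; rewrite G_ge0 // !ltW. Qed.

End kernel.

Ltac Gnum_cases x y := let h := fresh in have [h|h] := lerP x y;
  [rewrite (@Gnum_le _ x y h) | rewrite (@Gnum_ge _ x y (ltW h))].

Section reflection_inequalities.
Context {R : realType}.
Implicit Types b x y : R.

Lemma G_add_refl_le b x y : 0 < b < pi -> b <= x <= pi -> b < y < pi ->
  G x y + G (2 * b - x) y <= G x (2 * b - y) + G (2 * b - x) (2 * b - y).
Proof.
move=> /andP[b0 b1] /andP[x1 x2] /andP[y1 y2]; apply: lerD_G.
Gnum_cases x y; Gnum_cases (2 * b - x) y; Gnum_cases x (2 * b - y);
  Gnum_cases (2 * b - x) (2 * b - y); nra.
Qed.

Lemma G_refl_cross_le b x y : 0 < b < pi -> b <= x <= pi -> b < y < pi ->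
  [/\ G x y + G x (2 * b - y) <= G (2 * b - x) y + G (2 * b - x) (2 * b - y),
      G x (2 * b - y) <= G (2 * b - x) (2 * b - y) & G x y <= G (2 * b - x) (2 * b - y)].
Proof.
move=> /andP[b0 b1] /andP[x1 x2] /andP[y1 y2]; split.
- apply: lerD_G; Gnum_cases x y; Gnum_cases (2 * b - x) y; Gnum_cases x (2 * b - y);
    Gnum_cases (2 * b - x) (2 * b - y); nra.
- by apply: ler_G; Gnum_cases x (2 * b - y); Gnum_cases (2 * b - x) (2 * b - y); nra.
- by apply: ler_G; Gnum_cases x y; Gnum_cases (2 * b - x) (2 * b - y); nra.
Qed.

Lemma G_refl_fixed_le b x y : 0 < b < pi -> b <= x <= pi -> - pi < y < pi ->
  y = b \/ y <= 2 * b - pi -> G x y <= G (2 * b - x) y.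
Proof.
move=> /andP[b0 b1] /andP[x1 x2] /andP[y1 y2] yb; apply: ler_G.
by Gnum_cases x y; Gnum_cases (2 * b - x) y; case: yb => yb; nra.
Qed.

Lemma G_le_refl b x y : 0 < b < pi -> - pi <= x <= b -> b < y < pi ->
  G x y <= G x (2 * b - y).
Proof.
move=> /andP[b0 b1] /andP[x1 x2] /andP[y1 y2]; apply: ler_G.
by Gnum_cases x y; Gnum_cases x (2 * b - y); nra.
Qed.

Lemma G_lt_refl b x y : 0 < b < pi -> - pi < x <= b -> b < y < pi ->
  G x y < G x (2 * b - y).
Proof.
move=> /andP[b0 b1] /andP[x1 x2] /andP[y1 y2]; apply: ltr_G.
by Gnum_cases x y; Gnum_cases x (2 * b - y); nra.
Qed.

End reflection_inequalities.

Section potential.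
Context {R : realType}.
Implicit Types (m k : R -> R) (x : R).

Definition admissible m : Prop :=
  [/\ forall x, 0 <= m x, forall x, m x != 0 -> - pi < x < pi &
      \esum_(y in [set: R]) (m y)%:E \is a fin_num].

Definition pot m k : \bar R := \esum_(y in [set: R]) (m y * k y)%:E.

Lemma esum_supp m (F : R -> R) : (forall y, m y = 0 -> F y = 0) ->
  \esum_(y in supp m) (F y)%:E = \esum_(y in [set: R]) (F y)%:E.
Proof.
move=> F0; rewrite esum_mkcond; apply: eq_esum => y _.
case: ifPn => // /negP ysupp; rewrite F0 //; apply/eqP/negPn/negP => my0.
by apply: ysupp; rewrite inE.
Qed.

Lemma u_pot m x : u m x = fine (pot m (G x)).
Proof. by rewrite /u esum_supp // => y ->; rewrite mul0r. Qed.

Lemma pd_measure_admissible m : pd_measure m -> admissible m.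
Proof.
move=> [m0 msupp _ mfin _]; split => //; move: mfin; rewrite esum_supp //.
by move=> mfin; rewrite ge0_fin_numE // esum_ge0 // => y _; rewrite lee_fin.
Qed.

Lemma admissible_out {m x} : admissible m -> ~~ (- pi < x < pi) -> m x = 0.
Proof. by move=> [_ msupp _] xout; apply/eqP; apply: contraNT xout => /msupp. Qed.

Lemma pot_term_ge0 m k y : admissible m -> (forall y, - pi < y < pi -> 0 <= k y) ->
  (0 <= (m y * k y)%:E)%E.
Proof.
move=> [m0 msupp _] k0; rewrite lee_fin.
by have [->|/msupp/k0 ky0] := eqVneq (m y) 0; rewrite ?mul0r ?mulr_ge0.
Qed.

Lemma potD m k1 k2 : admissible m ->
  (forall y, - pi < y < pi -> 0 <= k1 y) -> (forall y, - pi < y < pi -> 0 <= k2 y) ->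
  pot m (fun y => k1 y + k2 y) = (pot m k1 + pot m k2)%E.
Proof.
move=> madm k10 k20; rewrite /pot -esumD; last 2 first.
- by move=> y _; exact: pot_term_ge0.
- by move=> y _; exact: pot_term_ge0.
by apply: eq_esum => y _; rewrite mulrDr.
Qed.

Lemma pot_G_fin m x : admissible m -> - pi <= x <= pi -> pot m (G x) \is a fin_num.
Proof.
move=> madm hx; have [m0 msupp mfin] := madm.
have mE0 y : (0 <= (m y)%:E)%E by rewrite lee_fin.
apply: (@ge0_fin_num_le _ _ (\esum_(y in [set: R]) ((m y)%:E + (m y)%:E))%E).
- by rewrite esumD // fin_numD mfin.
- by apply: esum_ge0 => y _; apply: pot_term_ge0 => // z; apply: G_ge0_open.
apply: le_esum => y _; rewrite -EFinD lee_fin.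
have [->|/msupp /andP[y1 y2]] := eqVneq (m y) 0; first by rewrite mul0r addr0.
have Gle2 : G x y <= 2 by rewrite G_le2 // !ltW.
by rewrite -mulr2n -mulr_natr ler_wpM2l.
Qed.

Lemma EFin_u m x : admissible m -> - pi <= x <= pi -> (u m x)%:E = pot m (G x).
Proof. by move=> madm hx; rewrite u_pot fineK ?pot_G_fin. Qed.

Lemma EFin_uD m x x' : admissible m -> - pi <= x <= pi -> - pi <= x' <= pi ->
  (u m x + u m x')%:E = pot m (fun y => G x y + G x' y).
Proof.
by move=> madm hx hx'; rewrite EFinD !EFin_u // potD // => y; apply: G_ge0_open.
Qed.

End potential.

Section polarization_positive.
Context {R : realType} {b : R} {m : R -> R}.
Hypotheses (hb : 0 < b < pi) (madm : admissible m).

Let upper : set R := [set y | b < y < pi].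

Lemma refl_twice y : 2 * b - (2 * b - y) = y.
Proof. by rewrite opprB addrC subrK. Qed.

Lemma refl_involutive : involutive (fun y : R => 2 * b - y).
Proof. exact: refl_twice. Qed.

Lemma upper_refl y : upper y -> ~ upper (2 * b - y).
Proof. by rewrite /upper /= => /andP[y1 _] /andP[y2 _]; lra. Qed.

Lemma polar_upper y : upper y ->
  polar b m y = Num.min (m y) (m (2 * b - y)) /\
  polar b m (2 * b - y) = Num.max (m y) (m (2 * b - y)).
Proof.
case/andP: hb => b0 b1; rewrite /upper /= => /andP[y1 y2]; rewrite /polar b0.
have -> : - pi < y < pi by apply/andP; split; lra.
have -> : - pi < 2 * b - y < pi by apply/andP; split; lra.
rewrite ifF; last by apply/negbTE; rewrite -leNgt; lra.
rewrite ifF; last by apply/negbTE; rewrite -ltNge.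
rewrite ifF; last by apply/negbTE; rewrite -leNgt; lra.
rewrite ifT; last by lra.
by rewrite refl_twice maxC.
Qed.

Lemma fixed_point_cases y : ~ upper y -> ~ upper (2 * b - y) -> - pi < y < pi ->
  y = b \/ y <= 2 * b - pi.
Proof.
case/andP: hb => b0 b1; rewrite /upper /= => yN syN /andP[y1 y2].
have [<-|ney] := eqVneq b y; [by left | right].
have [yb|by_] := ltrP y b; last first.
  by exfalso; apply: yN; rewrite /= lt_neqAle ney by_ y2.
by rewrite leNgt; apply/negP => yl; apply: syN; apply/andP; split; lra.
Qed.

Lemma polar_fixed y : ~ upper y -> ~ upper (2 * b - y) -> polar b m y = m y.
Proof.
move=> yN syN; case/andP: hb => b0 b1; rewrite /polar b0.
have [yin|yout] := boolP (- pi < y < pi); last by rewrite (admissible_out madm yout).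
have [->|yl] := fixed_point_cases _ yN syN yin.
  rewrite /= ifF; last by apply/negbTE; rewrite -leNgt; lra.
  by rewrite lexx mulr_natl mulr2n addrK maxxx.
rewrite /=; case: ltrP => // yge; rewrite ifT; last by lra.
have -> : y = 2 * b - pi by apply/eqP; rewrite eq_le yl yge.
rewrite refl_twice (admissible_out madm (x := pi)) ?ltxx ?andbF //.
by apply/max_idPl; case: madm.
Qed.

Lemma polar_id : (forall y, upper y -> m y <= m (2 * b - y)) -> polar b m = m.
Proof.
move=> mle; apply/funext => y; have [Ay|yN] := pselect (upper y).
  by have [-> _] := polar_upper _ Ay; apply/min_idPl/mle.
have [Asy|syN] := pselect (upper (2 * b - y)); last exact: polar_fixed.
have [_] := polar_upper _ Asy; rewrite refl_twice => ->.
by apply/max_idPr; rewrite -[X in _ <= m X]refl_twice mle.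
Qed.

Lemma admissible_polar : admissible (polar b m).
Proof.
have [m0 msupp mfin] := madm.
have polar0 x : 0 <= polar b m x.
  by rewrite /polar; repeat case: ifP => _; rewrite ?le_min ?le_max ?m0.
split => //.
  by move=> x; rewrite /polar; case: ifPn => [_|/negPn //]; rewrite eqxx.
apply: (ge0_fin_num_le _ _ mfin); first by apply: esum_ge0 => y _; rewrite lee_fin.
apply: (le_esum_pair refl_involutive upper_refl) => y; rewrite ?lee_fin //.
- by move=> Ay; have [-> ->] := polar_upper _ Ay; rewrite addr_min_max.
- by move=> yN syN; rewrite polar_fixed.
Qed.

Local Hint Resolve admissible_polar : core.

Lemma pot_polar_le (k k' : R -> R) :
  (forall y, - pi < y < pi -> 0 <= k y) -> (forall y, - pi < y < pi -> 0 <= k' y) ->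
  (forall y, upper y -> [/\ k y + k (2 * b - y) <= k' y + k' (2 * b - y),
                            k (2 * b - y) <= k' (2 * b - y) & k y <= k' (2 * b - y)]) ->
  (forall y, - pi < y < pi -> ~ upper y -> ~ upper (2 * b - y) -> k y <= k' y) ->
  (pot m k <= pot (polar b m) k')%E.
Proof.
have [m0 msupp _] := madm; move=> k0 k'0 kup kfix.
apply: (le_esum_pair refl_involutive upper_refl) => y.
- exact: pot_term_ge0.
- exact: pot_term_ge0.
- move=> Ay; have [-> ->] := polar_upper _ Ay; have [k1 k2 k3] := kup y Ay.
  by rewrite -!EFinD lee_fin le_comb_minmax.
- move=> yN syN; rewrite polar_fixed // lee_fin.
  have [->|/msupp yin] := eqVneq (m y) 0; first by rewrite !mul0r.
  by rewrite ler_wpM2l ?kfix.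
Qed.

Lemma pot_polar_le_refl (k : R -> R) :
  (forall y, - pi < y < pi -> 0 <= k y) ->
  (forall y, upper y -> k y <= k (2 * b - y)) ->
  (pot m k <= pot (polar b m) k)%E.
Proof. by move=> k0 kup; apply: pot_polar_le => // y /kup; split. Qed.

Lemma pot_polar_lt_refl (k : R -> R) y0 :
  (forall y, - pi < y < pi -> 0 <= k y) ->
  (forall y, upper y -> k y < k (2 * b - y)) ->
  upper y0 -> m (2 * b - y0) < m y0 -> pot (polar b m) k \is a fin_num ->
  (pot m k < pot (polar b m) k)%E.
Proof.
have [m0 _ _] := madm; move=> k0 kup Ay0 my0.
apply: (lt_esum_pair refl_involutive upper_refl _ _ _ _ _ _ _ Ay0)
  => [y|y|y Ay|y yN syN|].
- exact: pot_term_ge0.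
- exact: pot_term_ge0.
- have [-> ->] := polar_upper _ Ay; have kyy := ltW (kup y Ay).
  by rewrite -!EFinD lee_fin le_comb_minmax.
- by rewrite polar_fixed.
- have [-> ->] := polar_upper _ Ay0.
  by rewrite -!EFinD lte_fin lt_comb_minmax ?kup.
Qed.

Lemma u_add_refl_le_polar x : b <= x <= pi ->
  u m x + u m (2 * b - x) <= u (polar b m) x + u (polar b m) (2 * b - x).
Proof.
have [b0 b1] := andP hb; move=> hx; have [x1 x2] := andP hx.
have hx' : - pi <= x <= pi by apply/andP; split; lra.
have hsx : - pi <= 2 * b - x <= pi by apply/andP; split; lra.
rewrite -lee_fin !EFin_uD //.
apply: pot_polar_le_refl => [y yin|y Ay]; last exact: G_add_refl_le.
by rewrite addr_ge0 // G_ge0_open.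
Qed.

Lemma u_le_polar_refl x : b <= x <= pi -> u m x <= u (polar b m) (2 * b - x).
Proof.
have [b0 b1] := andP hb; move=> hx; have [x1 x2] := andP hx.
have hx' : - pi <= x <= pi by apply/andP; split; lra.
have hsx : - pi <= 2 * b - x <= pi by apply/andP; split; lra.
rewrite -lee_fin !EFin_u //.
apply: pot_polar_le => [y|y|y Ay|y yin yN syN]; try exact: G_ge0_open.
  exact: G_refl_cross_le.
exact/G_refl_fixed_le/fixed_point_cases.
Qed.

Lemma u_le_polar x : - pi <= x <= b -> u m x <= u (polar b m) x.
Proof.
have [b0 b1] := andP hb; move=> hx; have [x1 x2] := andP hx.
have hx' : - pi <= x <= pi by apply/andP; split; lra.
rewrite -lee_fin !EFin_u //.
by apply: pot_polar_le_refl => [y|y Ay]; [exact: G_ge0_open | exact: G_le_refl].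
Qed.

Lemma polar_id_of_u_eq x : - pi < x <= b -> u m x = u (polar b m) x ->
  polar b m = m.
Proof.
have [b0 b1] := andP hb; move=> hx; have [x1 x2] := andP hx.
have hx' : - pi <= x <= pi by apply/andP; split; lra.
move=> ueq; apply: polar_id => y Ay; rewrite leNgt; apply/negP => my.
have : (pot m (G x) < pot (polar b m) (G x))%E.
  apply: (pot_polar_lt_refl _ _ _ _ Ay my) => [z|z Az|].
  - exact: G_ge0_open.
  - exact: G_lt_refl.
  - exact: pot_G_fin.
by rewrite -!EFin_u // ueq ltxx.
Qed.

End polarization_positive.

Section reflection_through_zero.
Context {R : realType}.
Implicit Types (m : R -> R) (b x : R).

Lemma esum_opp (f : R -> \bar R) :
  \esum_(y in [set: R]) f (- y) = \esum_(y in [set: R]) f y.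
Proof.
rewrite -(esum_image _ (fun y => - y)); last by move=> y z _ _ /oppr_inj.
by congr esum; apply/seteqP; split => y // _; exists (- y); rewrite ?opprK.
Qed.

Lemma pot_opp m k :
  pot (fun y => m (- y)) (fun y => k (- y)) = pot m k.
Proof. exact: (esum_opp (fun y => (m y * k y)%:E)). Qed.

Lemma u_opp m x : u (fun y => m (- y)) (- x) = u m x.
Proof.
rewrite !u_pot -[in RHS]pot_opp; congr (fine (pot _ _)); apply/funext => y.
by rewrite -[in LHS](opprK y) G_opp.
Qed.

Lemma admissible_opp {m} : admissible m -> admissible (fun y => m (- y)).
Proof.
move=> [m0 msupp mfin]; split => // [x /msupp|].
  by rewrite ltrNr opprK ltrNl andbC.
by rewrite (esum_opp (fun y => (m y)%:E)).
Qed.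

Lemma polar_opp b m x : - pi < b < 0 ->
  polar (- b) (fun y => m (- y)) (- x) = polar b m x.
Proof.
case/andP=> b1 b0; rewrite /polar oppr_gt0 b0 (lt_gtF b0) /=.
rewrite ltrNr opprK ltrNl andbC; case: ifP => // _.
have -> : - (2 * - b - - x) = 2 * b - x by ring.
rewrite opprK lerN2; case: (ltgtP x b) => [xb|bx|->].
- by rewrite ifF //; apply/negbTE; rewrite -leNgt; lra.
- case: lerP => x2b /=.
    by rewrite ifT //; lra.
  by rewrite ifF //; apply/negbTE; rewrite -ltNge; lra.
- rewrite ifF; last by apply/negbTE; rewrite -leNgt; lra.
  by rewrite mulr_natl mulr2n addrK maxxx minxx.
Qed.

Lemma u_polar_opp b m x : - pi < b < 0 ->
  u (polar (- b) (fun y => m (- y))) (- x) = u (polar b m) x.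
Proof.
move=> hb; rewrite -[RHS]u_opp; congr (u _ _); apply/funext => y.
by rewrite -[in LHS](opprK y) polar_opp.
Qed.

Lemma opp_range {b} : - pi < b < 0 -> 0 < - b < pi.
Proof. by case/andP=> b1 b2; apply/andP; split; lra. Qed.

Lemma refl_opp b x : 2 * - b - - x = - (2 * b - x).
Proof. by ring. Qed.

End reflection_through_zero.

Section polarization.
Context {R : realType} {b : R} {m : R -> R}.
Hypotheses (hb : (- pi < b < 0) \/ (0 < b < pi)) (madm : admissible m).

Lemma polarization_sum_le x : Iset b x ->
  u m x + u m (2 * b - x) <= u (polar b m) x + u (polar b m) (2 * b - x).
Proof.
case: hb => hb'; have /andP[b1 b2] := hb'; rewrite /Iset; last first.
  by rewrite b1 /= in_itv /=; exact: u_add_refl_le_polar.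
rewrite (lt_gtF b2) /= in_itv /= => /andP[x1 x2].
have hx : - b <= - x <= pi by apply/andP; split; lra.
have := u_add_refl_le_polar (opp_range hb') (admissible_opp madm) _ hx.
by rewrite refl_opp !u_opp !u_polar_opp.
Qed.

Lemma polarization_refl_le x : Iset b x -> u m x <= u (polar b m) (2 * b - x).
Proof.
case: hb => hb'; have /andP[b1 b2] := hb'; rewrite /Iset; last first.
  by rewrite b1 /= in_itv /=; exact: u_le_polar_refl.
rewrite (lt_gtF b2) /= in_itv /= => /andP[x1 x2].
have hx : - b <= - x <= pi by apply/andP; split; lra.
have := u_le_polar_refl (opp_range hb') (admissible_opp madm) _ hx.
by rewrite refl_opp u_opp u_polar_opp.
Qed.

Lemma polarization_le x : Jset b x -> u m x <= u (polar b m) x.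
Proof.
case: hb => hb'; have /andP[b1 b2] := hb'; rewrite /Jset; last first.
  by rewrite b1 /= in_itv /=; exact: u_le_polar.
rewrite (lt_gtF b2) /= in_itv /= => /andP[x1 x2].
have hx : - pi <= - x <= - b by apply/andP; split; lra.
have := u_le_polar (opp_range hb') (admissible_opp madm) _ hx.
by rewrite u_opp u_polar_opp.
Qed.

Lemma polarization_rigid x : Joset b x -> u m x = u (polar b m) x -> polar b m = m.
Proof.
case: hb => hb'; have /andP[b1 b2] := hb'; rewrite /Joset; last first.
  by rewrite b1 /= in_itv /=; exact: polar_id_of_u_eq.
rewrite (lt_gtF b2) /= in_itv /= => /andP[x1 x2] ueq.
have hx : - pi < - x <= - b by apply/andP; split; lra.
have := polar_id_of_u_eq (opp_range hb') (admissible_opp madm) _ hx.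
rewrite u_opp u_polar_opp // => /(_ ueq) id_opp; apply/funext => y.
by rewrite -polar_opp // -[in RHS](opprK y) id_opp.
Qed.

End polarization.

Theorem lemma4p4 (R : realType) (m : R -> R) (b : R) :
  pd_measure m ->
  (- pi < b < 0) \/ (0 < b < pi) ->
  let mH := polar b m in
  (* (a) *)
  (forall x, Iset b x -> u m x + u m (2 * b - x) <= u mH x + u mH (2 * b - x)) /\
  (* (b) *)
  (forall x, Iset b x -> u m x <= u mH (2 * b - x)) /\
  (* (c) *)
  (forall x, Jset b x -> u m x <= u mH x) /\
  (* equivalence of (i)-(iv) *)
  (let P1 := exists2 x, Joset b x & u m x = u mH x in
   let P2 := forall x, Joset b x -> u m x = u mH x in
   let P3 := forall x, - pi <= x <= pi -> u m x = u mH x in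
   let P4 := m = mH in
   (P1 <-> P4) /\ (P2 <-> P4) /\ (P3 <-> P4)).
Proof.
move=> /pd_measure_admissible madm hb mH.
split; first exact: polarization_sum_le.
split; first exact: polarization_refl_le.
split; first exact: polarization_le.
have bJo : Joset b b.
  case: hb => /andP[b1 b2]; rewrite /Joset ?(lt_gtF b2) ?b1 /= in_itv /= lexx ?andbT;
    lra.
have bI : - pi <= b <= pi by apply/andP; case: hb => /andP[b1 b2]; split; lra.
move=> P1 P2 P3 P4.
have P1_P4 : P1 -> P4.
  by case=> x xJo /(polarization_rigid hb madm _ xJo) mHE; rewrite /P4 /mH mHE.
have P4_u : P4 -> forall x, u m x = u mH x by move=> mE x; rewrite -mE.
rewrite /P2 /P3; split; [|split]; split => [hP|/P4_u ueq]; try by move=> x _.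
- exact: P1_P4.
- by exists b.
- by apply: P1_P4; exists b; last exact: hP.
- by apply: P1_P4; exists b; last exact: hP.
Qed.
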